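(* Let $A \in \mathbb{C}^{n \times n}$, and fix $A^-\in A\{1\}$ and $A^{GD}\in A\{GD\}$. For $X\in\mathbb{C}^{n\times n}$ the following are equivalent: (i) $X = A^{GD}AA^{-}$; (ii) $AX = AA^{-}$ and $R(X)=R(A^{GD}A)$; (iii) $A^{-}AX = A^{-}AA^{-}$ and $R(X)=R(A^{GD}A)$.
   Context: For $A\in\mathbb{C}^{n\times n}$, $ind(A)$ is the smallest nonnegative integer $k$ with $\mathrm{rank}(A^k)=\mathrm{rank}(A^{k+1})$. $A\{1\}$ is the set of matrices $X$ with $AXA=A$. With $k=ind(A)$, $A\{GD\}$ is the set of G-Drazin inverses of $A$: matrices $X$ with $AXA=A$, $XA^{k+1}=A^k$, $A^{k+1}X=A^k$. $R(\cdot)$ denotes range (column space). The matrix $A^{GD}AA^-$ is called the GD1 inverse of $A$ associated with $A^-$ and $A^{GD}$. *)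

From HB Require Import structures.
From mathcomp Require Import all_boot all_order all_algebra.
From mathcomp Require Import complex.
From mathcomp Require Import Rstruct.
Set Implicit Arguments. Unset Strict Implicit. Unset Printing Implicit Defensive.
Import GRing.Theory Num.Theory.
Local Open Scope ring_scope.

Notation C := (complex Rdefinitions.R).

(* ind(A): smallest k >= 0 with rank(A^k) = rank(A^(k+1)).  Such k exists and
   is <= n, so searching in [0, n] finds the minimum. *)
Definition ind (n : nat) (A : 'M[C]_n) : nat :=
  find (fun k => \rank (A ^+ k) == \rank (A ^+ k.+1)) (iota 0 n.+1).

Definition inner_inv (n : nat) (A X : 'M[C]_n) : Prop := A *m X *m A = A.

Definition GD_inv (n : nat) (A X : 'M[C]_n) : Prop :=
  let k := ind A in
  [/\ A *m X *m A = A, X *m A ^+ k.+1 = A ^+ k & A ^+ k.+1 *m X = A ^+ k].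

(* R(X) = R(Y): equality of column spaces (column space of X = row space of X^T) *)
Definition range_eq (m n p : nat) (X : 'M[C]_(m, n)) (Y : 'M[C]_(m, p)) : bool :=
  (X^T == Y^T)%MS.

(* With T := A^GD A A^-, the identities A A^- A = A and A A^GD A = A give
   T A = A^GD A and A T = A A^-, so T and A^GD A have the same range and T
   satisfies (ii), which trivially implies (iii).  Conversely, if
   R(X) = R(A^GD A), write X = A^GD A D; then A^- A X = A^- A D, so (iii) says
   A^- A D = A^- A A^-, whence X = A^GD A (A^- A D) = A^GD A A^- A A^- = T. *)

From mathcomp Require Import all_boot all_algebra complex Rstruct.
Set Implicit Arguments.
Unset Strict Implicit.
Local Open Scope ring_scope.

Section GD1Inverse.

Variables (F : fieldType) (n : nat) (A M G : 'M[F]_n).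
Hypotheses (AMA : A *m M *m A = A) (AGA : A *m G *m A = A).

Definition gd1 : 'M[F]_n := G *m A *m M.

Lemma gd1_mulA : gd1 *m A = G *m A.
Proof. by rewrite /gd1 -!mulmxA (mulmxA A) AMA. Qed.

Lemma mulA_gd1 : A *m gd1 = A *m M.
Proof. by rewrite /gd1 !mulmxA AGA. Qed.

Lemma gd1_col_eq : (gd1^T == (G *m A)^T)%MS.
Proof.
apply/andP; split; first by rewrite trmx_mul submxMl.
by rewrite -{1}gd1_mulA trmx_mul submxMl.
Qed.

Lemma gd1_unique (X : 'M[F]_n) :
  (X^T <= (G *m A)^T)%MS -> M *m A *m X = M *m A *m M -> X = gd1.
Proof.
case/submxP=> D /(congr1 trmx); rewrite trmx_mul !trmxK => defX.
have MAX : M *m A *m X = M *m A *m D^T.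
  by rewrite defX -!mulmxA (mulmxA A G) (mulmxA (A *m G)) AGA.
rewrite MAX => MAD.
by rewrite defX -gd1_mulA /gd1 -!mulmxA (mulmxA M) MAD !mulmxA -/gd1 gd1_mulA.
Qed.

End GD1Inverse.

Theorem theorem2p5 (n : nat) (A Am AGD X : 'M[C]_n) :
  inner_inv A Am -> GD_inv A AGD ->
  [/\ (X = AGD *m A *m Am <-> (A *m X = A *m Am /\ range_eq X (AGD *m A))),
      (X = AGD *m A *m Am <->
         (Am *m A *m X = Am *m A *m Am /\ range_eq X (AGD *m A)))
    & ((A *m X = A *m Am /\ range_eq X (AGD *m A)) <->
         (Am *m A *m X = Am *m A *m Am /\ range_eq X (AGD *m A)))].
Proof.
move=> AMA [AGA _ _].
have i_ii : X = gd1 A Am AGD -> A *m X = A *m Am /\ range_eq X (AGD *m A).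
  by move=> ->; split; [exact: mulA_gd1 AGA | exact: gd1_col_eq AGD AMA].
have ii_iii : A *m X = A *m Am -> Am *m A *m X = Am *m A *m Am.
  by move=> AX; rewrite -!mulmxA AX.
have iii_i : Am *m A *m X = Am *m A *m Am -> range_eq X (AGD *m A) ->
    X = gd1 A Am AGD.
  by move=> MAX /andP[sub_X _]; exact: (gd1_unique AMA AGA sub_X MAX).
split; split.
- exact: i_ii.
- by case=> AX rX; exact: iii_i (ii_iii AX) rX.
- by move=> defX; have [AX rX] := i_ii defX; split; first exact: ii_iii.
- by case=> MAX rX; exact: iii_i MAX rX.
- by case=> AX rX; split; first exact: ii_iii.
- by case=> MAX rX; exact: i_ii (iii_i MAX rX).
Qed.
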